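(* Let $R$ be a Noetherian ring, $I\subseteq R$ an ideal, and $J_1=(f_1,\ldots,f_m)\subseteq I$, $J_2=(g_1,\ldots,g_m)\subseteq I$ ideals with $f_i-g_i\in I^2$ for $i=1,\ldots,m$. Assume the pair $J_1\subseteq I$ is Aluffi torsion-free. Let $\mathcal Z_1=\{(a_1,\ldots,a_m)\in R^m:\sum a_if_i=0\}$ and $\mathcal Z_2=\{(a_1,\ldots,a_m)\in R^m:\sum a_ig_i=0\}$. Then $J_2\subseteq I$ is Aluffi torsion-free if and only if $\mathcal Z_1\cap I^nR^m\subseteq \mathcal Z_2+I^{n+1}R^m$ for all $n\ge0$.
   Context: A pair of ideals $J\subseteq I$ in a ring $R$ is called Aluffi torsion-free if $J\cap I^n=JI^{n-1}$ for all $n\ge1$ (with $I^0=R$). *)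

From HB Require Import structures.
From mathcomp Require Import all_boot all_order all_algebra.
Set Implicit Arguments. Unset Strict Implicit. Unset Printing Implicit Defensive.
Import GRing.Theory.
Local Open Scope ring_scope.

Section Ideals.
Variable R : comNzRingType.

Definition is_ideal (I : R -> Prop) : Prop :=
  [/\ I 0, (forall x y, I x -> I y -> I (x + y)) & (forall r x, I x -> I (r * x))].

Definition gen_ideal (m : nat) (f : 'I_m -> R) : R -> Prop :=
  fun x => exists a : 'I_m -> R, x = \sum_(i < m) a i * f i.

Definition ideal_mul (I J : R -> Prop) : R -> Prop :=
  fun x => exists (n : nat) (a b : 'I_n -> R),
    (forall i, I (a i) /\ J (b i)) /\ x = \sum_(i < n) a i * b i.

Fixpoint ideal_pow (I : R -> Prop) (n : nat) : R -> Prop :=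
  match n with
  | 0%N => fun _ => True
  | n'.+1 => ideal_mul (ideal_pow I n') I
  end.

Definition noetherian : Prop :=
  forall I : R -> Prop, is_ideal I ->
    exists (m : nat) (f : 'I_m -> R), forall x, I x <-> gen_ideal f x.

Definition aluffi_torsion_free (J I : R -> Prop) : Prop :=
  forall n : nat, (1 <= n)%N ->
    forall x, (J x /\ ideal_pow I n x) <-> ideal_mul J (ideal_pow I n.-1) x.

Definition syzygy (m : nat) (f : 'I_m -> R) (a : 'I_m -> R) : Prop :=
  \sum_(i < m) a i * f i = 0.

End Ideals.

(* Since f_i - g_i lies in I^2, a combination
   sum a_i f_i with a_i in I^k differs from sum a_i g_i by an element of I^(k+2).
   If J_2 is Aluffi torsion-free and a is a syzygy of f lying in I^n, then
   sum a_i g_i lies in J_2 and in I^(n+2), hence equals sum b_i g_i with b_i in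
   I^(n+1), and z := a - b is the required syzygy of g.  Conversely, to show
   J_2 ∩ I^n ⊆ J_2 I^(n-1) one raises the I-adic order of the coefficients of
   x = sum a_i g_i one step at a time: torsion-freeness of J_1 rewrites
   sum a_i f_i with coefficients b_i one order higher, a - b is a syzygy of f,
   and its approximation z by a syzygy of g gives the new coefficients a - z. *)
From HB Require Import structures.
From mathcomp Require Import all_boot all_order all_algebra.
From mathcomp Require Import ring.
Set Implicit Arguments. Unset Strict Implicit.
Import GRing.Theory.
Local Open Scope ring_scope.

Section IdealFacts.
Variable R : comNzRingType.
Implicit Types (K J : R -> Prop) (x y : R).

Lemma idealD K x y : is_ideal K -> K x -> K y -> K (x + y).
Proof. by case=> _ KD _; apply: KD. Qed.

Lemma idealMl K r x : is_ideal K -> K x -> K (r * x).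
Proof. by case=> _ _ KM; apply: KM. Qed.

Lemma idealN K x : is_ideal K -> K x -> K (- x).
Proof. by move=> HK Kx; rewrite -mulN1r; apply: idealMl. Qed.

Lemma idealB K x y : is_ideal K -> K x -> K y -> K (x - y).
Proof. by move=> HK Kx Ky; apply: idealD => //; apply: idealN. Qed.

Lemma ideal_sum K n (F : 'I_n -> R) :
  is_ideal K -> (forall i, K (F i)) -> K (\sum_(i < n) F i).
Proof. by case=> K0 KD _ KF; apply: (big_ind K) => // i _; apply: KF. Qed.

Lemma ideal_mul_is_ideal J K : is_ideal K -> is_ideal (ideal_mul J K).
Proof.
move=> HK; split.
- exists 0%N, (fun _ => 0), (fun _ => 0); split; first by case.
  by rewrite big_ord0.
- move=> x y [n1 [a1 [b1 [H1 ->]]]] [n2 [a2 [b2 [H2 ->]]]].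
  exists (n1 + n2)%N,
    (fun i => match split i with inl j => a1 j | inr j => a2 j end),
    (fun i => match split i with inl j => b1 j | inr j => b2 j end).
  split; first by move=> i; case: (split i) => j.
  rewrite big_split_ord /=; congr (_ + _); apply: eq_bigr => i _.
  + by rewrite (unsplitK (inl i)).
  + by rewrite (unsplitK (inr i)).
- move=> r x [n [a [b [H ->]]]].
  exists n, a, (fun i => r * b i); split.
  + by move=> i; case: (H i) => Ha Hb; split => //; apply: idealMl.
  + by rewrite big_distrr; apply: eq_bigr => i _ /=; ring.
Qed.

Lemma sum_mulBl m (a b g : 'I_m -> R) :
  \sum_(i < m) (a i - b i) * g i = \sum_(i < m) a i * g i - \sum_(i < m) b i * g i.
Proof. by rewrite -sumrB; apply: eq_bigr => i _; rewrite mulrBl. Qed.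

Lemma sum_mulBr m (a f g : 'I_m -> R) :
  \sum_(i < m) a i * (f i - g i) = \sum_(i < m) a i * f i - \sum_(i < m) a i * g i.
Proof. by rewrite -sumrB; apply: eq_bigr => i _; rewrite mulrBr. Qed.

Lemma gen_ideal_gen m (g : 'I_m -> R) i : gen_ideal g (g i).
Proof.
exists (fun j => (j == i)%:R).
rewrite (bigD1 i) //= eqxx mul1r big1 ?addr0 // => j /negbTE ->.
by rewrite mul0r.
Qed.

Lemma ideal_mul_genP K m (g : 'I_m -> R) x : is_ideal K ->
  (ideal_mul (gen_ideal g) K x <->
   exists b : 'I_m -> R, (forall i, K (b i)) /\ x = \sum_(i < m) b i * g i).
Proof.
move=> HK; split.
- move=> [N [u [v [H ->]]]].
  have [c Hc] : exists c : 'I_N -> 'I_m -> R,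
      forall l, u l = \sum_(i < m) c l i * g i.
    apply: (@fin_all_exists _ (fun _ => 'I_m -> R)
      (fun l w => u l = \sum_(i < m) w i * g i)) => l.
    by case: (H l) => [[w Hw] _]; exists w.
  exists (fun i => \sum_(l < N) c l i * v l); split.
    move=> i; apply: ideal_sum => // l.
    by case: (H l) => _ Hv; apply: idealMl.
  under [RHS]eq_bigr do rewrite big_distrl.
  rewrite exchange_big /=; apply: eq_bigr => l _.
  by rewrite Hc big_distrl; apply: eq_bigr => i _ /=; ring.
- move=> [b [Hb ->]]; exists m, g, b; split.
    by move=> i; split => //; apply: gen_ideal_gen.
  by apply: eq_bigr => i _; rewrite mulrC.
Qed.

End IdealFacts.

Section IdealPowers.
Variables (R : comNzRingType) (I : R -> Prop).
Hypothesis HI : is_ideal I.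

Lemma ideal_pow_is_ideal n : is_ideal (ideal_pow I n).
Proof. by case: n => [|n] /=; [split | apply: ideal_mul_is_ideal]. Qed.

Lemma ideal_powM k j x y :
  ideal_pow I k x -> ideal_pow I j y -> ideal_pow I (k + j) (x * y).
Proof.
elim: j y => [|j IH] y Hx Hy.
  by rewrite addn0 mulrC; apply: idealMl => //; apply: ideal_pow_is_ideal.
rewrite addnS; move: Hy => [N [c [d [H ->]]]].
exists N, (fun l => x * c l), d; split.
  by move=> l; case: (H l) => Hc Hd; split => //; apply: IH.
by rewrite big_distrr; apply: eq_bigr => i _ /=; ring.
Qed.

Lemma ideal_pow1 y : I y -> ideal_pow I 1 y.
Proof.
by move=> Hy; exists 1%N, (fun _ => 1), (fun _ => y); rewrite big_ord1 mul1r.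
Qed.

Lemma ideal_powSW k x : ideal_pow I k.+1 x -> ideal_pow I k x.
Proof.
move=> [N [a [b [H ->]]]]; apply: ideal_sum; first exact: ideal_pow_is_ideal.
move=> i; case: (H i) => Ha _; rewrite mulrC.
by apply: idealMl => //; apply: ideal_pow_is_ideal.
Qed.

Lemma ideal_mul_gen_pow_sub m (g : 'I_m -> R) n x :
  (forall i, I (g i)) -> ideal_mul (gen_ideal g) (ideal_pow I n) x ->
  gen_ideal g x /\ ideal_pow I n.+1 x.
Proof.
move=> Hg /(ideal_mul_genP _ _ (ideal_pow_is_ideal n)) [b [Hb ->]].
split; first by exists b.
apply: ideal_sum => [|i]; first exact: ideal_pow_is_ideal.
by rewrite -addn1; apply: ideal_powM => //; apply: ideal_pow1.
Qed.

Lemma torsion_free_coeffs m (f : 'I_m -> R) n x :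
  aluffi_torsion_free (gen_ideal f) I ->
  gen_ideal f x -> ideal_pow I n.+1 x ->
  exists b : 'I_m -> R,
    (forall i, ideal_pow I n (b i)) /\ x = \sum_(i < m) b i * f i.
Proof.
move=> Htf Jx Inx.
by apply/(ideal_mul_genP _ _ (ideal_pow_is_ideal n)); apply/(Htf n.+1).
Qed.

End IdealPowers.

Section ChangeOfGenerators.
Variables (R : comNzRingType) (I : R -> Prop) (m : nat) (f g : 'I_m -> R).
Hypothesis HI : is_ideal I.
Hypothesis Hfg : forall i, ideal_pow I 2 (f i - g i).

Lemma comb_diff_pow n (a : 'I_m -> R) :
  (forall i, ideal_pow I n (a i)) ->
  ideal_pow I n.+2 (\sum_(i < m) a i * f i - \sum_(i < m) a i * g i).
Proof.
move=> Ha; rewrite -sum_mulBr.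
apply: ideal_sum => [|i]; first exact: ideal_pow_is_ideal.
by rewrite -addn2; apply: ideal_powM.
Qed.

Lemma syzygy_lift_of_torsion_free :
  aluffi_torsion_free (gen_ideal g) I ->
  forall n (a : 'I_m -> R), syzygy f a -> (forall i, ideal_pow I n (a i)) ->
  exists z : 'I_m -> R, syzygy g z /\ forall i, ideal_pow I n.+1 (a i - z i).
Proof.
move=> Htg n a Hfa Ha.
have Hx : ideal_pow I n.+2 (\sum_(i < m) a i * g i).
  have -> : \sum_(i < m) a i * g i =
            - (\sum_(i < m) a i * f i - \sum_(i < m) a i * g i).
    by rewrite Hfa sub0r opprK.
  by apply: idealN; [apply: ideal_pow_is_ideal | apply: comb_diff_pow].
have [|b [Hb Hab]] := torsion_free_coeffs HI Htg _ Hx; first by exists a.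
exists (fun i => a i - b i); split; first by rewrite /syzygy sum_mulBl Hab subrr.
by move=> i; rewrite opprB addrC subrK.
Qed.

Hypothesis Htf : aluffi_torsion_free (gen_ideal f) I.
Hypothesis Hlift : forall n (a : 'I_m -> R),
  syzygy f a -> (forall i, ideal_pow I n (a i)) ->
  exists z : 'I_m -> R, syzygy g z /\ forall i, ideal_pow I n.+1 (a i - z i).

Lemma raise_coeff_order k (a : 'I_m -> R) :
  (forall i, ideal_pow I k (a i)) -> ideal_pow I k.+2 (\sum_(i < m) a i * g i) ->
  exists a' : 'I_m -> R, (forall i, ideal_pow I k.+1 (a' i)) /\
    \sum_(i < m) a' i * g i = \sum_(i < m) a i * g i.
Proof.
move=> Ha Hx.
have Hy : ideal_pow I k.+2 (\sum_(i < m) a i * f i).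
  rewrite -(subrK (\sum_(i < m) a i * g i) (\sum_(i < m) a i * f i)).
  by apply: idealD => //; [apply: ideal_pow_is_ideal | apply: comb_diff_pow].
have [|b [Hb Hab]] := torsion_free_coeffs HI Htf _ Hy; first by exists a.
have Hd : syzygy f (fun i => a i - b i) by rewrite /syzygy sum_mulBl -Hab subrr.
have Hdk : forall i, ideal_pow I k (a i - b i).
  by move=> i; apply: idealB; [apply: ideal_pow_is_ideal | | apply: ideal_powSW].
have [z [Hz Hdz]] := Hlift Hd Hdk.
exists (fun i => a i - z i); split; last by rewrite sum_mulBl Hz subr0.
move=> i; rewrite -(subrK (b i) (a i)) -addrA [b i + _]addrC addrA.
by apply: idealD; [apply: ideal_pow_is_ideal | apply: Hdz | apply: Hb].
Qed.

Lemma gen_coeffs_in_pow n x : gen_ideal g x -> ideal_pow I n.+1 x ->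
  exists a : 'I_m -> R,
    (forall i, ideal_pow I n (a i)) /\ x = \sum_(i < m) a i * g i.
Proof.
move=> [a0 ->]; elim: n => [|n IH] Hx; first by exists a0.
have [a [Ha Ha0]] := IH (ideal_powSW HI Hx).
rewrite Ha0 in Hx.
have [a' [Ha' Heq]] := raise_coeff_order Ha Hx.
by exists a'; rewrite Ha0 Heq.
Qed.

End ChangeOfGenerators.

Theorem theorem2p7 (R : comNzRingType) (m : nat) (I : R -> Prop)
    (f g : 'I_m -> R) :
  noetherian R ->
  is_ideal I ->
  (forall x, gen_ideal f x -> I x) ->
  (forall x, gen_ideal g x -> I x) ->
  (forall i, ideal_pow I 2 (f i - g i)) ->
  aluffi_torsion_free (gen_ideal f) I ->
  (aluffi_torsion_free (gen_ideal g) I <->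
   forall n : nat, forall a : 'I_m -> R,
     syzygy f a -> (forall i, ideal_pow I n (a i)) ->
     exists z : 'I_m -> R,
       syzygy g z /\ forall i, ideal_pow I n.+1 (a i - z i)).
Proof.
move=> _ HI _ Hg Hfg Htf; split; first exact: syzygy_lift_of_torsion_free.
move=> Hlift n n_gt0 x; rewrite -{1 2}(prednK n_gt0); split.
- move=> [Jx Inx].
  have [a [Ha ->]] := gen_coeffs_in_pow HI Hfg Htf Hlift Jx Inx.
  by apply/(ideal_mul_genP _ _ (ideal_pow_is_ideal HI _)); exists a.
- apply: ideal_mul_gen_pow_sub => // i.
  by apply: Hg; apply: gen_ideal_gen.
Qed.
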